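(* Let $X$ be a compact riemannian lamination and let $\Omega\subseteq Y\subseteq X$ be such that $\Omega$ is open in the leafwise topology and $Y$ is compact in the leafwise topology. There exists an open subset $\hat\Omega$ of $X$ such that $\hat\Omega\cap Y=\Omega$.
   Context: A lamination is a separable metrizable space with an atlas of laminated charts $\Phi:U\to\,]-1,1[^d\times T$ whose transition maps locally have the form $(x,t)\mapsto(\phi(x,t),\tau(t))$ ($\tau$ a homeomorphism onto its image, $\phi(\cdot,t)$ smooth diffeomorphisms varying continuously in $C^\infty_{loc}$ with $t$); plaques glue into smooth manifolds called leaves. A riemannian lamination carries a leafwise smooth leafwise metric. The leafwise topology of $X$ is the smallest topology containing all open subsets of leaves; a set is compact in it iff it is a finite union of compact subsets of leaves. ''Open subset of $X$'' refers to the ambient topology of $X$. *)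

From HB Require Import structures.
From mathcomp Require Import all_boot all_order all_algebra.
From mathcomp Require Import all_classical all_reals all_analysis.
From Stdlib Require Import Relations.
Set Implicit Arguments. Unset Strict Implicit. Unset Printing Implicit Defensive.
Import Order.TTheory GRing.Theory Num.Theory.
Import numFieldNormedType.Exports.
Local Open Scope classical_set_scope.
Local Open Scope ring_scope.

Section Smooth.
Variable R : realType.

Fixpoint dder {U W : normedModType R} (vs : seq U) (f : U -> W) : U -> W :=
  if vs is v :: vs' then (fun a => derive (dder vs' f) a v) else f.

Definition smooth_on {U W : normedModType R} (A : set U) (f : U -> W) :=
  forall vs : seq U,
    (forall x v, A x -> derivable (dder vs f) x v) /\
    {within A, continuous (dder vs f)}.

(* the family t |-> f(., t), t in S, consists of C^infty maps on A and depends
   continuously on t in the C^infty_loc topology: all iterated derivatives are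
   jointly continuous in (x, t) *)
Definition smooth_family {U W : normedModType R} {T : topologicalType}
    (A : set U) (S : set T) (f : U -> T -> W) :=
  forall vs : seq U,
    (forall t, S t -> forall x v, A x -> derivable (dder vs (f ^~ t)) x v) /\
    {within A `*` S, continuous (fun p => dder vs (f ^~ p.2) p.1)}.

Definition diffeo_on {U : normedModType R} (A : set U) (f : U -> U) :=
  [/\ open A, open (f @` A),
      (forall x y, A x -> A y -> f x = f y -> x = y),
      smooth_on A f &
      exists g : U -> U, (forall x, A x -> g (f x) = x) /\ smooth_on (f @` A) g].
End Smooth.

Definition homeo_on {T T' : topologicalType} (S : set T) (f : T -> T') :=
  [/\ {within S, continuous f},
      (forall x y, S x -> S y -> f x = f y -> x = y) &
      exists g : T' -> T, (forall x, S x -> g (f x) = x) /\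
                          {within f @` S, continuous g}].

Definition cube (R : realType) (d : nat) : set 'rV[R]_d :=
  [set x | forall k, -1 < x ord0 k < 1].

(* data of a laminated atlas: charts phi i : U i -> ]-1,1[^d x T i, with inverse psi i *)
Record lam_atlas (R : realType) (X : topologicalType) : Type := LamAtlas {
  la_dim : nat;
  la_idx : Type;
  la_T : la_idx -> topologicalType;
  la_U : la_idx -> set X;
  la_phi : forall i, X -> 'rV[R]_la_dim * la_T i;
  la_psi : forall i, 'rV[R]_la_dim * la_T i -> X }.
Arguments la_dim {R X} A : rename.
Arguments la_idx {R X} A : rename.
Arguments la_T {R X} A i : rename.
Arguments la_U {R X} A i : rename.
Arguments la_phi {R X} A i : rename.
Arguments la_psi {R X} A i : rename.

Section Lamination.
Variables (R : realType) (X : topologicalType) (A : lam_atlas R X).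
Local Notation d := (la_dim A).
Local Notation U := (la_U A).
Local Notation phi := (la_phi A).
Local Notation psi := (la_psi A).

Definition transition (i j : la_idx A) (p : 'rV[R]_d * la_T A i) := phi j (psi i p).
Arguments transition : clear implicits.

Definition is_lamination :=
  (forall x : X, exists i, U i x) /\
  (forall i,
    [/\ open (U i), {within U i, continuous (phi i)},
        phi i @` U i = @cube R d `*` setT &
        [/\ (forall x, U i x -> psi i (phi i x) = x),
             (forall p, (@cube R d `*` setT) p -> phi i (psi i p) = p) &
             {within @cube R d `*` setT, continuous (psi i)}]]) /\
  (forall i j p, (phi i @` (U i `&` U j)) p ->
    exists (V : set 'rV[R]_d) (S : set (la_T A i))
           (f : 'rV[R]_d -> la_T A i -> 'rV[R]_d) (tau : la_T A i -> la_T A j),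
      [/\ [/\ open V, open S, V `*` S `<=` phi i @` (U i `&` U j), V p.1 & S p.2],
          (forall x t, V x -> S t -> transition i j (x, t) = (f x t, tau t)),
          homeo_on S tau,
          (forall t, S t -> diffeo_on V (f ^~ t)) &
          smooth_family V S f]).

(* a leafwise metric, expressed in charts: g i x t is an inner product on R^d *)
Definition leaf_metric := forall i, 'rV[R]_d -> la_T A i -> 'rV[R]_d -> 'rV[R]_d -> R.

Definition is_riemannian (g : leaf_metric) :=
  (forall i x t, @cube R d x ->
     [/\ (forall u1 u2 w (a : R), g i x t (a *: u1 + u2) w = a * g i x t u1 w + g i x t u2 w),
         (forall u w, g i x t u w = g i x t w u) &
         (forall u, u != 0 -> 0 < g i x t u u)]) /\
  (forall i (u w : 'rV[R]_d), smooth_family (@cube R d) setT (fun x t => g i x t u w)) /\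
  (forall i j x t u w, (phi i @` (U i `&` U j)) (x, t) ->
     g i x t u w =
     g j (transition i j (x, t)).1 (transition i j (x, t)).2
         (derive (fun y => (transition i j (y, t)).1) x u)
         (derive (fun y => (transition i j (y, t)).1) x w)).

Definition same_plaque (x y : X) :=
  exists i, U i x /\ U i y /\ (phi i x).2 = (phi i y).2.

Definition leaf (L : set X) :=
  exists x, L = [set y | clos_refl_trans X same_plaque x y].

(* open subsets of a leaf (for the leaf's manifold topology, whose basic open sets
   are the open subsets psi i (V x {t}) of plaques) *)
Definition open_in_leaf (L B : set X) :=
  B `<=` L /\
  forall x, B x -> exists i (V : set 'rV[R]_d),
    [/\ open V, V `<=` @cube R d, U i x, V (phi i x).1 &
        psi i @` (V `*` [set (phi i x).2]) `<=` B].

(* the leafwise topology: the smallest topology containing all open subsets of leaves *)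
Definition leafwise_open (B : set X) :=
  forall O : set (set X),
    (forall L C, leaf L -> open_in_leaf L C -> O C) ->
    (forall F : set (set X), F `<=` O -> O (\bigcup_(C in F) C)) ->
    (forall C D, O C -> O D -> O (C `&` D)) ->
    O setT -> O B.

Definition leafwise_compact (Y : set X) :=
  forall (I : Type) (F : I -> set X), (forall k, leafwise_open (F k)) ->
    Y `<=` \bigcup_k F k ->
    exists J : set I, finite_set J /\ Y `<=` \bigcup_(k in J) F k.
End Lamination.

Definition separable_space (T : topologicalType) :=
  exists D : set T, countable D /\ closure D = setT.

From HB Require Import structures.
From mathcomp Require Import all_boot all_order all_algebra.
From mathcomp Require Import all_classical all_reals all_analysis.
From Stdlib Require Import Relations.
Set Implicit Arguments.
Unset Strict Implicit.
Import numFieldNormedType.Exports.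
Local Open Scope classical_set_scope.

(* The leafwise topology refines the topology of X: an open set meets every
   leaf in a union of open pieces of plaques.  Hence an ambient open cover of
   Y \ Omega, together with Omega, is a leafwise open cover of Y, so Y \ Omega
   is compact in X and therefore closed, X being Hausdorff.  Its complement is
   the required open set. *)

(* The library proves [compact_cover] only for pointed spaces; any point of a
   nonempty set can serve. *)
Definition pointed_at {T : topologicalType} (x : T) : Type := T.
HB.instance Definition _ (T : topologicalType) (x : T) :=
  Topological.copy (pointed_at x) T.
HB.instance Definition _ (T : topologicalType) (x : T) :=
  isPointed.Build (pointed_at x) x.

Lemma cover_compact_compact (T : topologicalType) (K : set T) :
  cover_compact K -> compact K.
Proof.
have [->|/set0P[k _]] := eqVneq K set0; first by move=> _; exact: compact0.
by rewrite -[compact K]/(@compact (pointed_at k) K) compact_cover.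
Qed.

Lemma open_slice (T U : topologicalType) (W : set (T * U)) (t : U) :
  open W -> open [set x | W (x, t)].
Proof.
move=> oW; apply: (@open_comp _ _ (pair^~ t) W _ oW) => x _.
by apply: cvg_pair; [exact: cvg_id|exact: cvg_cst].
Qed.

Section LeafwiseTopology.
Variables (R : realType) (X : topologicalType) (A : lam_atlas R X).
Local Notation d := (la_dim A).
Local Notation U := (la_U A).
Local Notation phi := (la_phi A).
Local Notation psi := (la_psi A).
Local Notation chart_range i := (@cube R d `*` [set: la_T A i]).

Lemma leafwise_open_bigcup (I : Type) (P : set I) (F : I -> set X) :
  (forall i, P i -> leafwise_open A (F i)) ->
  leafwise_open A (\bigcup_(i in P) F i).
Proof.
move=> oF O HO HU HI HT; rewrite -(bigcup_image P F id).
by apply: (HU) => _ [i Pi <-]; exact: oF.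
Qed.

Definition leaf_of (x : X) := [set y | clos_refl_trans X (same_plaque A) x y].

Hypothesis lamA : is_lamination A.

(* The transition from a chart to itself provides product neighbourhoods
   inside the image of the chart. *)
Lemma open_chart_range i : open (chart_range i).
Proof.
have [_ [/(_ i) [_ _ phiU _] trans]] := lamA.
rewrite -phiU openE => _ [x Ux <-].
have [V [S [f [tau [[oV oS VS Vx Sx] _ _ _ _]]]]] :=
  trans i i (phi i x) (ex_intro2 _ _ x (conj Ux Ux) erefl).
apply: (@filterS _ _ _ (V `*` S)); first by move=> q /VS [y [Uy _] <-]; exists y.
by exists (V, S) => //; split; apply: open_nbhs_nbhs.
Qed.

Lemma same_plaque_chart i y v : U i y -> @cube R d v ->
  same_plaque A y (psi i (v, (phi i y).2)).
Proof.
have [_ [/(_ i) [_ _ phiU [psiphi phipsi _]] _]] := lamA.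
move=> Uiy cv; have : chart_range i (v, (phi i y).2) by [].
rewrite -phiU => -[u Uu phiu]; exists i; split=> //; split.
  by rewrite -phiu psiphi.
by rewrite phipsi.
Qed.

Lemma open_in_leaf_setI_open (B : set X) x :
  open B -> open_in_leaf A (leaf_of x) (B `&` leaf_of x).
Proof.
have [cov [chart _]] := lamA.
move=> oB; split=> [y []//|y [By xy]].
have [i Uiy] := cov y.
have [_ _ phiU [psiphi _ cpsi]] := chart i.
pose t := (phi i y).2.
pose W := chart_range i `&` psi i @^-1` B.
have oW : open W.
  apply: (continuous_inP _ (@open_chart_range i)).1 => //.
  by rewrite -continuous_open_subspace //; exact: open_chart_range.
pose V := [set v | W (v, t)].
have oV : open V by exact: open_slice.
exists i, V; split => //.
- by move=> v [[]].
- have phiy : chart_range i (phi i y) by rewrite -phiU; exists y.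
  by rewrite /V /W /t /= -surjective_pairing psiphi.
- move=> _ [[v s] [/= [[cv _] Bv] ->] <-]; split => //.
  by apply: rt_trans xy _; apply: rt_step; exact: same_plaque_chart.
Qed.

Lemma open_leafwise_open (B : set X) : open B -> leafwise_open A B.
Proof.
move=> oB; have -> : B = \bigcup_(x in B) (B `&` leaf_of x).
  apply/seteqP; split=> [x Bx|x [y _ []//]].
  by exists x => //; split=> //; exact: rt_refl.
apply: leafwise_open_bigcup => x _ O HO _ _ _.
by apply: (HO (leaf_of x)); [exists x | exact: open_in_leaf_setI_open].
Qed.

Lemma compact_setD_leafwise_open (Y Omega : set X) :
  leafwise_compact A Y -> leafwise_open A Omega -> compact (Y `\` Omega).
Proof.
move=> cY oOmega; apply: cover_compact_compact => I D f fop Kcov.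
pose F (j : option I) := if j is Some i then [set x | D i /\ f i x] else Omega.
have oF j : leafwise_open A (F j).
  case: j => [i|//]; apply: open_leafwise_open; rewrite /F.
  have [Di|nDi] := pselect (D i).
    by rewrite (_ : [set x | _] = f i); [exact: fop|apply/seteqP; split=> x // []].
  by rewrite (_ : [set x | _] = set0); [exact: open0|apply/seteqP; split=> x // []].
have YF : Y `<=` \bigcup_j F j.
  move=> y Yy; have [Oy|Oy] := pselect (Omega y); first by exists None.
  by have [i Di fiy] := Kcov y (conj Yy Oy); exists (Some i).
have [J [fJ YJ]] := cY _ F oF YF.
have fJD : finite_set (Some @^-1` J `&` D).
  by apply: finite_setIl; apply: finite_preimage => // i j _ _ [].
exists (fset_set (Some @^-1` J `&` D)) => [i|x [Yx Ox]].
  by rewrite in_fset_set // !inE => -[].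
have [[i|] Ji Fx] := YJ x Yx; last by [].
case: Fx => Di fx; exists i => //=.
by rewrite in_fset_set // inE.
Qed.

End LeafwiseTopology.

Theorem lemma4p8 (R : realType) (X : pseudoMetricType R)
    (A : lam_atlas R X) (g : leaf_metric A) (Omega Y : set X) :
  hausdorff_space X -> separable_space X ->
  is_lamination A -> is_riemannian g ->
  compact [set: X] ->
  Omega `<=` Y -> leafwise_open A Omega -> leafwise_compact A Y ->
  exists Omegahat : set X, open Omegahat /\ Omegahat `&` Y = Omega.
Proof.
move=> hX _ lamA _ _ OY oOmega cY.
have clK : closed (Y `\` Omega).
  exact: compact_closed hX (compact_setD_leafwise_open lamA cY oOmega).
exists (~` (Y `\` Omega)); split; first exact: closed_openC.
by rewrite setCD setIUl setICl set0U setIidl.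
Qed.
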